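(* Let $m,g\geq3$ be odd integers, $n=mg$ and $k=1+(m-1)g$, and let $A$ be a cyclically $k$-diagonal $n\times n$ array. Then there exists a solution to $P(A)$.
   Context: Arrays are partially filled and toroidal; $F(A)$ is the set of filled cells. $s_R(i,j)=(i,j+t)$, $s_C(i,j)=(i+t,j)$ with $t\ge1$ minimal such that the cell is filled. For $R,C\in\{-1,1\}^n$, $CN_{RC}(i,j)=s_C^{c_{j'}}(i,j')$ where $(i,j')=s_R^{r_i}(i,j)$. A solution to $P(A)$ is a pair $R,C$ such that $CN_{RC}$ is a permutation of $F(A)$ forming a single cycle of length $|F(A)|$. An $n\times n$ array is cyclically $k$-diagonal if its filled cells are exactly the $(i,j)$ with $i-j\bmod n\in\{0,\dots,k-1\}$. *)

From mathcomp Require Import all_boot all_algebra.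
Set Implicit Arguments. Unset Strict Implicit. Unset Printing Implicit Defensive.

(* Arrays are n x n, toroidal; a partially filled array is identified with
   its set of filled cells F(A) : {set 'I_n * 'I_n}. Rows/columns indexed 0..n-1. *)

Lemma ord_pos n (j : 'I_n) : 0 < n.
Proof. exact: leq_ltn_trans (leq0n j) (ltn_ord j). Qed.

Definition shiftf n (j : 'I_n) (t : nat) : 'I_n :=
  Ordinal (ltn_pmod (j + t) (ord_pos j)).
(* j - t  (mod n), for 0 <= t <= n *)
Definition shiftb n (j : 'I_n) (t : nat) : 'I_n :=
  Ordinal (ltn_pmod (j + (n - t)) (ord_pos j)).

(* s_R : (i,j) |-> (i, j+t), t >= 1 minimal with (i,j+t) filled.
   Toroidally the minimal t (if one exists) lies in 1..n; for a filled cell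
   t = n always works, so the search over 1..n is exact. *)
Definition sR n (A : {set 'I_n * 'I_n}) (c : 'I_n * 'I_n) : 'I_n * 'I_n :=
  let t := (find (fun t => (c.1, shiftf c.2 t) \in A) (iota 1 n)).+1 in
  (c.1, shiftf c.2 t).
Definition sRinv n (A : {set 'I_n * 'I_n}) (c : 'I_n * 'I_n) : 'I_n * 'I_n :=
  let t := (find (fun t => (c.1, shiftb c.2 t) \in A) (iota 1 n)).+1 in
  (c.1, shiftb c.2 t).
Definition sC n (A : {set 'I_n * 'I_n}) (c : 'I_n * 'I_n) : 'I_n * 'I_n :=
  let t := (find (fun t => (shiftf c.1 t, c.2) \in A) (iota 1 n)).+1 in
  (shiftf c.1 t, c.2).
Definition sCinv n (A : {set 'I_n * 'I_n}) (c : 'I_n * 'I_n) : 'I_n * 'I_n :=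
  let t := (find (fun t => (shiftb c.1 t, c.2) \in A) (iota 1 n)).+1 in
  (shiftb c.1 t, c.2).

Definition sR_pow n A (e : int) (c : 'I_n * 'I_n) :=
  if e == 1%R then sR A c else sRinv A c.
Definition sC_pow n A (e : int) (c : 'I_n * 'I_n) :=
  if e == 1%R then sC A c else sCinv A c.

Definition CN n (A : {set 'I_n * 'I_n}) (R C : 'I_n -> int) (c : 'I_n * 'I_n) :=
  let c' := sR_pow A (R c.1) c in sC_pow A (C c'.2) c'.

Definition sign_vec n (R : 'I_n -> int) := forall i, R i = 1%R \/ R i = (-1)%R.

(* (R,C) is a solution to P(A): R,C in {-1,1}^n and CN_{RC} is a permutation
   of F(A) forming a single cycle of length |F(A)|. *)
Definition is_solution n (A : {set 'I_n * 'I_n}) (R C : 'I_n -> int) : Prop :=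
  [/\ sign_vec R, sign_vec C,
      (forall x, x \in A -> CN A R C x \in A),
      {in A &, injective (CN A R C)} &
      (forall x y, x \in A -> y \in A -> exists k, iter k (CN A R C) x = y)].

Definition cyc_diag n (k : nat) (A : {set 'I_n * 'I_n}) : Prop :=
  forall c : 'I_n * 'I_n, (c \in A) = ((c.1 + (n - c.2)) %% n < k).

From mathcomp Require Import all_boot all_algebra zify.
Set Implicit Arguments. Unset Strict Implicit. Unset Printing Implicit Defensive.

(* Take R = 1 everywhere and C_j = 1 exactly for the columns j = 0 and j = k.  Record a
   filled cell by its column j and its diagonal index d = i - j (mod n), 0 <= d < k.  Then s_R
   moves one column to the right (g columns when d = 0, jumping over the empty band) and lowers
   d by one (mod k), while s_C and s_C^-1 raise and lower d by one.  Hence CN advances the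
   column by the same gap and keeps d when it lands in column 0 or k, lowering d by 2 (mod k)
   otherwise.
   As k is odd, writing d = -2t (mod k) and letting V + t be the column reached by the next
   step turns CN into a walk on n fibers V, each a k-cycle of heights t: the walker climbs its
   fiber and moves to the next one (V + 1, or V + g from height 0) exactly when V + t is 0, k
   or n.  The fibers 0, 1..g-1 and k+1..n-1 have a single exit and are swept in one go; the
   fibers g..k have two exits and are swept in two passes.  Following the walk from (g, 0)
   shows that it visits all nk states before returning, so CN is one cycle through the nk
   filled cells. *)

Ltac case_ifs := repeat match goal with
  | |- context[if ?b then _ else _] =>
      lazymatch b with true => fail | false => fail | _ =>
        let E := fresh "E" in destruct b eqn:E; cbv iota end
  | H : context[if ?b then _ else _] |- _ =>
      lazymatch b with true => fail | false => fail | _ =>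
        let E := fresh "E" in revert H; destruct b eqn:E; intro H; cbv iota in H end
  end.

Lemma modn_small2 x n : x < n + n -> x %% n = if x < n then x else x - n.
Proof.
move=> lt_x_2n; case: ifP => lt_xn; first by rewrite modn_small.
by rewrite -[x](@subnK n) ?modnDr ?modn_small //; lia.
Qed.

Definition diag n (i j : nat) := (i + (n - j)) %% n.

Lemma diagE n i j : i < n -> j < n -> diag n i j = if j <= i then i - j else i + n - j.
Proof. by move=> *; rewrite /diag modn_small2; case_ifs; lia. Qed.

Section DiagShift.
Variables (n i j s : nat).
Hypotheses (lt_in : i < n) (lt_jn : j < n) (le_sn : s <= n).

Lemma diag_shift_col : diag n i ((j + s) %% n) = (diag n i j + (n - s)) %% n.
Proof.
have := ltn_pmod (j + s) (ltac:(lia) : 0 < n).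
by rewrite (modn_small2 (_ : j + s < n + n)) ?modn_small2 ?diagE //; case_ifs; lia.
Qed.

Lemma diag_shift_row : diag n ((i + s) %% n) j = (diag n i j + s) %% n.
Proof.
have := ltn_pmod (i + s) (ltac:(lia) : 0 < n).
by rewrite (modn_small2 (_ : i + s < n + n)) ?modn_small2 ?diagE //; case_ifs; lia.
Qed.

Lemma diag_unshift_row : diag n ((i + (n - s)) %% n) j = (diag n i j + (n - s)) %% n.
Proof.
have := ltn_pmod (i + (n - s)) (ltac:(lia) : 0 < n).
by rewrite (modn_small2 (_ : i + (n - s) < n + n)) ?modn_small2 ?diagE //; case_ifs; lia.
Qed.

End DiagShift.

Lemma find_iota1 (p : pred nat) n t0 :
  0 < t0 <= n -> p t0 -> (forall s, 0 < s < t0 -> ~~ p s) ->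
  find p (iota 1 n) = t0.-1.
Proof.
move=> /andP[t0_gt0 le_t0n] p_t0 not_p.
have has_p : has p (iota 1 n) by apply/hasP; exists t0; rewrite // mem_iota; lia.
have lt_find : find p (iota 1 n) < n by rewrite -{2}(size_iota 1 n) -has_find.
case: (ltngtP (find p (iota 1 n)) t0.-1) => // [lt_t0|gt_t0].
- have := nth_find 0 has_p; rewrite nth_iota // => p_find.
  by have := not_p (1 + find p (iota 1 n)); rewrite p_find => /(_ ltac:(lia)).
- by have := before_find 0 gt_t0; rewrite nth_iota ?add1n ?prednK ?p_t0 //; lia.
Qed.

Section FirstFilled.
Variables (n k g d : nat).
Hypotheses (n_def : n = k + g - 1) (g_gt0 : 0 < g) (lt_dk : d < k).

Lemma find_first_backward :
  find (fun t => (d + (n - t)) %% n < k) (iota 1 n) = if d == 0 then g.-1 else 0.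
Proof.
rewrite (@find_iota1 _ _ (if d == 0 then g else 1)); first by case: ifP.
- by case: ifP; lia.
- by rewrite modn_small2; case_ifs; lia.
- by move=> s s_range; rewrite modn_small2; case_ifs; lia.
Qed.

Lemma find_first_forward :
  find (fun t => (d + t) %% n < k) (iota 1 n) = if d == k.-1 then g.-1 else 0.
Proof.
rewrite (@find_iota1 _ _ (if d == k.-1 then g else 1)); first by case: ifP.
- by case: ifP; lia.
- by rewrite modn_small2; case_ifs; lia.
- by move=> s s_range; rewrite modn_small2; case_ifs; lia.
Qed.

End FirstFilled.

Definition coldiag n (c : 'I_n * 'I_n) : nat * nat := (c.2 : nat, diag n c.1 c.2).

Lemma coldiag_inj n : injective (@coldiag n).
Proof.
move=> [i1 j1] [i2 j2] [/= eq_j eq_d]; congr pair; apply: val_inj => //=.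
have := ltn_ord i1; have := ltn_ord i2; have := ltn_ord j1.
by move: eq_d; rewrite !diagE -?eq_j //; case_ifs; lia.
Qed.

Section ShiftsOnCyclicDiagonal.
Variables (n k g : nat) (A : {set 'I_n * 'I_n}).
Hypotheses (A_diag : cyc_diag k A) (n_def : n = k + g - 1) (g_gt0 : 0 < g).

Lemma mem_cyc_diag c : (c \in A) = ((coldiag c).2 < k).
Proof. exact: A_diag. Qed.

Variable c : 'I_n * 'I_n.
Hypothesis c_in_A : c \in A.
Let d := diag n c.1 c.2.

Lemma coldiag_sR : coldiag (sR A c) =
  let: (j, d) := coldiag c in ((j + if d == 0 then g else 1) %% n, if d == 0 then k.-1 else d.-1).
Proof.
rewrite [coldiag c]/coldiag -/d.
move: c_in_A; rewrite mem_cyc_diag /= -/d => lt_dk.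
have [lt_in lt_jn] := (ltn_ord c.1, ltn_ord c.2).
rewrite /sR (@eq_in_find _ _ (fun t => (d + (n - t)) %% n < k)); last first.
  move=> t; rewrite mem_iota A_diag /= => t_range.
  by rewrite -/(diag _ _ _) diag_shift_col //; lia.
rewrite (find_first_backward n_def) // /coldiag /= diag_shift_col // -/d; last by case: ifP; lia.
by case: eqP => d0; rewrite ?prednK //= !modn_small2; case_ifs; try congr pair; lia.
Qed.

Lemma coldiag_sC : coldiag (sC A c) =
  let: (j, d) := coldiag c in (j, if d == k.-1 then 0 else d.+1).
Proof.
rewrite [coldiag c]/coldiag -/d.
move: c_in_A; rewrite mem_cyc_diag /= -/d => lt_dk.
have [lt_in lt_jn] := (ltn_ord c.1, ltn_ord c.2).
rewrite /sC (@eq_in_find _ _ (fun t => (d + t) %% n < k)); last first.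
  move=> t; rewrite mem_iota A_diag /= => t_range.
  by rewrite -/(diag _ _ _) diag_shift_row //; lia.
rewrite (find_first_forward n_def) // /coldiag /= diag_shift_row // -/d; last by case: ifP; lia.
by case: eqP => d0; rewrite ?prednK //= !modn_small2; case_ifs; try congr pair; lia.
Qed.

Lemma coldiag_sCinv : coldiag (sCinv A c) =
  let: (j, d) := coldiag c in (j, if d == 0 then k.-1 else d.-1).
Proof.
rewrite [coldiag c]/coldiag -/d.
move: c_in_A; rewrite mem_cyc_diag /= -/d => lt_dk.
have [lt_in lt_jn] := (ltn_ord c.1, ltn_ord c.2).
rewrite /sCinv (@eq_in_find _ _ (fun t => (d + (n - t)) %% n < k)); last first.
  move=> t; rewrite mem_iota A_diag /= => t_range.
  by rewrite -/(diag _ _ _) diag_unshift_row //; lia.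
rewrite (find_first_backward n_def) // /coldiag /= diag_unshift_row // -/d; last by case: ifP; lia.
by case: eqP => d0; rewrite ?prednK //= !modn_small2; case_ifs; try congr pair; lia.
Qed.

End ShiftsOnCyclicDiagonal.

(** * The map CN in column/diagonal coordinates *)

Definition corner k (j : nat) := (j == 0) || (j == k).

Definition column_signs n k (j : 'I_n) : int := if corner k j then 1%R else (-1)%R.

Definition coldiag_step n k g (p : nat * nat) : nat * nat :=
  let: (j, d) := p in
  let j' := (j + if d == 0 then g else 1) %% n in
  (j', if corner k j' then d else (d + (k - 2)) %% k).

Lemma coldiag_step_lt n k g p : p.2 < k -> (coldiag_step n k g p).2 < k.
Proof. by case: p => j d /= lt_dk; case: ifP => // _; rewrite ltn_pmod //; lia. Qed.

Lemma coldiag_step_inj n k g p q : p.1 < n -> p.2 < k -> q.1 < n -> q.2 < k ->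
  coldiag_step n k g p = coldiag_step n k g q -> p = q.
Proof.
case: p q => [j1 d1] [j2 d2] /= lt_j1n lt_d1k lt_j2n lt_d2k.
rewrite /coldiag_step => -[eq_j' eq_d']; move: eq_d'; rewrite -eq_j' => eq_d'.
have eq_d : d1 = d2.
  by move: eq_d'; case: ifP => _ // /eqP; rewrite eqn_modDr !modn_small // => /eqP.
move: eq_j'; rewrite -eq_d => /eqP; rewrite eqn_modDr !modn_small // => /eqP ->.
by rewrite eq_d.
Qed.

(** * Walks on fibers *)

Definition reach T (f : T -> T) x y := exists s, iter s f x = y.

Section Reach.
Variables (T : Type) (f : T -> T).

Lemma reach_refl x : reach f x x.
Proof. by exists 0. Qed.

Lemma reach_trans x y z : reach f x y -> reach f y z -> reach f x z.
Proof. by move=> [a <-] [b <-]; exists (b + a); rewrite iterD. Qed.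

Lemma reach_step x y : reach f x y -> reach f x (f y).
Proof. by move=> [a <-]; exists a.+1. Qed.

Lemma reach_between (P : T -> Prop) x0 z :
  (forall y, P y -> reach f x0 y) -> P z -> f z = x0 ->
  forall x y, P x -> P y -> reach f x y.
Proof.
move=> reach_x0 Pz fz x y /reach_x0[a <-] /reach_x0[b <-].
have [c zc] := reach_x0 z Pz.
have period : iter (c.+1 * a) f x0 = x0.
  by elim: a => [|a IH]; rewrite ?muln0 // mulnS iterD IH iterS zc fz.
exists (b + c.+1 * a - a); rewrite -iterD subnK; first by rewrite iterD period.
exact: leq_trans (leq_pmull a (ltn0Sn c)) (leq_addl _ _).
Qed.

End Reach.

Lemma iter_sim X Y (F : X -> X) (G : Y -> Y) (sim : X -> Y -> Prop) :
  (forall x y, sim x y -> sim (F x) (G y)) ->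
  forall s x y, sim x y -> sim (iter s F x) (iter s G y).
Proof. by move=> simF; elim=> // s IH x y /IH /simF. Qed.

Definition walk_step n k g (p : nat * nat) : nat * nat :=
  let: (V, t) := p in
  if corner k ((V + t) %% n) then ((V + if t == 0 then g else 1) %% n, t)
  else (V, t.+1 %% k).

Definition on_arc s t u := if s <= t then s <= u < t else (s <= u) || (u < t).

Section Walk.
Variables (n k g : nat).
Local Notation T := (walk_step n k g).
Local Notation exit V u := (corner k ((V + u) %% n)).

Lemma walk_step_valid V t : V < n -> t < k -> (T (V, t)).1 < n /\ (T (V, t)).2 < k.
Proof. by move=> lt_Vn lt_tk /=; case: ifP => _; split; rewrite /= ?ltn_pmod //; lia. Qed.

Lemma walk_up V s t : s <= t < k -> (forall u, s <= u < t -> ~~ exit V u) ->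
  reach T (V, s) (V, t).
Proof.
elim: t => [|t IH] /andP[le_st lt_tk] no_exit.
  by rewrite (_ : s = 0); [exact: reach_refl | lia].
case: (ltngtP s t.+1) => [lt_st||<-]; [|lia|exact: reach_refl].
have := reach_step (IH (ltac:(lia)) (fun u u_range => no_exit u (ltac:(lia)))).
by rewrite /= (negbTE (no_exit t (ltac:(lia)))) modn_small.
Qed.

Lemma walk_arc V s t : s < k -> t < k -> (forall u, u < k -> on_arc s t u -> ~~ exit V u) ->
  reach T (V, s) (V, t).
Proof.
move=> lt_sk lt_tk no_exit; case: (leqP s t) => [le_st|lt_ts].
  by apply: walk_up => [|u u_range]; [lia | apply: no_exit; rewrite /on_arc ?le_st; lia].
have no_exit' u : u < k -> s <= u \/ u < t -> ~~ exit V u.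
  by move=> lt_uk u_range; apply: no_exit => //; rewrite /on_arc leqNgt lt_ts /=; lia.
apply: (@reach_trans _ _ _ (V, k.-1)).
  by apply: walk_up => [|u u_range]; [lia | apply: no_exit'; lia].
apply: (@reach_trans _ _ _ (V, 0)).
  have := reach_step (reach_refl T (V, k.-1)).
  by rewrite /= (negbTE (no_exit' _ _ _)) ?prednK ?modnn //; lia.
by apply: walk_up => [|u u_range]; [lia | apply: no_exit'; lia].
Qed.

Lemma reach_walk x V s t : reach T x (V, s) -> s < k -> t < k ->
  (forall u, u < k -> on_arc s t u -> ~~ exit V u) -> reach T x (V, t).
Proof. by move=> reach_s lt_sk lt_tk /(walk_arc lt_sk lt_tk); apply: reach_trans. Qed.

Lemma reach_exit x V t p : reach T x (V, t) -> exit V t ->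
  ((V + if t == 0 then g else 1) %% n, t) = p -> reach T x p.
Proof. by move=> reach_t exit_t <-; have := reach_step reach_t; rewrite /= exit_t. Qed.

Lemma reach_fiber x V s e : reach T x (V, s) -> e < k ->
  (forall u, u < k -> exit V u -> u = e) -> s = e.+1 %% k ->
  forall t, t < k -> reach T x (V, t).
Proof.
move=> reach_s lt_ek only_e s_def t lt_tk.
have lt_sk : s < k by rewrite s_def ltn_pmod //; lia.
apply: (reach_walk reach_s) => // u lt_uk u_arc; apply/negP => /(only_e u lt_uk) u_e.
by move: u_arc; rewrite u_e s_def /on_arc modn_small2; case_ifs; lia.
Qed.

End Walk.

(* [exit_from V t] and [walk_from s] reduce reaching the current target to reaching the
   state just before it: height [t] of fiber [V], resp. height [s] of the target fiber. *)
Ltac no_exit := let u := fresh "u" in let lt_uk := fresh "lt_uk" in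
  move=> u lt_uk; rewrite /on_arc /corner modn_small2; case_ifs; lia.
Ltac only_exit := let u := fresh "u" in let lt_uk := fresh "lt_uk" in
  move=> u lt_uk; rewrite /corner modn_small2; case_ifs; lia.
Ltac is_exit := rewrite /corner modn_small2; case_ifs; lia.
Ltac same_state := congr pair; rewrite ?modn_small2; case_ifs; lia.
Ltac exit_from V t := apply: (@reach_exit _ _ _ _ V t); [| is_exit | same_state].
Ltac walk_from s := apply: (@reach_walk _ _ _ _ _ s); [| case_ifs; lia | lia | no_exit].

Section WalkOrbit.
Variables (g k n h R : nat).
Hypotheses (g_def : g = 2 * h + 1) (h_gt0 : 0 < h) (k_def : k = g + 2 * R) (lt_hR : h < R)
  (n_def : n = k + g - 1).
Local Notation T := (walk_step n k g).
Local Notation x0 := (g, 0).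

Lemma walk_step_origin : T (0, 0) = x0.
Proof. by rewrite /= mod0n /corner eqxx /= modn_small //; lia. Qed.

Lemma reach_first_pass_odd r : r < R ->
  reach T x0 (g + 2 * r, if r == 0 then 0 else k - 2 * r) ->
  reach T x0 (g + 2 * r + 1, k - g - 2 * r).
Proof.
move=> lt_rR reach_even.
exit_from (g + 2 * r) (k - g - 2 * r).
by walk_from (if r == 0 then 0 else k - 2 * r).
Qed.

Lemma reach_first_pass r : r <= R -> reach T x0 (g + 2 * r, if r == 0 then 0 else k - 2 * r).
Proof.
elim: r => [_|r IH le_rR]; first by rewrite muln0 addn0; exact: reach_refl.
exit_from (g + 2 * r + 1) (k - 2 - 2 * r).
walk_from (k - g - 2 * r).
by apply: reach_first_pass_odd; [lia | apply: IH; lia].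
Qed.

Lemma reach_fiber1 : reach T x0 (1, 0).
Proof.
exit_from k 0.
walk_from g.
have -> : (k, g) = (g + 2 * R, if R == 0 then 0 else k - 2 * R) by congr pair; case_ifs; lia.
exact: reach_first_pass.
Qed.

Lemma reach_low_fiber V : 0 < V < g -> reach T x0 (V, if V == 1 then 0 else k - V + 1).
Proof.
elim: V => [|V IH] V_range; first lia.
have [V0 | V_gt0] := posnP V; first by rewrite V0; exact: reach_fiber1.
exit_from V (k - V).
walk_from (if V == 1 then 0 else k - V + 1).
by apply: IH; lia.
Qed.

Lemma reach_second_pass_odd r : r < R -> reach T x0 (g + 2 * r, k - g - 2 * r + 1) ->
  reach T x0 (g + 2 * r + 1, k - 1 - 2 * r).
Proof.
move=> lt_rR reach_even.
exit_from (g + 2 * r) (k - 1 - 2 * r).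
by walk_from (k - g - 2 * r + 1).
Qed.

Lemma reach_second_pass r : r <= R -> reach T x0 (g + 2 * r, k - g - 2 * r + 1).
Proof.
elim: r => [_|r IH le_rR].
  exit_from (g - 1) (k - (g - 1)).
  walk_from (if g - 1 == 1 then 0 else k - (g - 1) + 1).
  by apply: reach_low_fiber; lia.
exit_from (g + 2 * r + 1) (k - g - 2 * r - 1).
walk_from (k - 1 - 2 * r).
by apply: reach_second_pass_odd; [lia | apply: IH; lia].
Qed.

Lemma reach_high_fiber i : k + 1 + i < n -> reach T x0 (k + 1 + i, g - 1 - i).
Proof.
elim: i => [|i IH] lt_in.
  exit_from k (g - 1).
  walk_from 1.
  have -> : (k, 1) = (g + 2 * R, k - g - 2 * R + 1) by congr pair; lia.
  exact: reach_second_pass.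
exit_from (k + 1 + i) (g - 2 - i).
walk_from (g - 1 - i).
by apply: IH; lia.
Qed.

Lemma reach_fiber0 : reach T x0 (0, 1).
Proof.
exit_from (n - 1) 1.
walk_from 2.
have -> : (n - 1, 2) = (k + 1 + (g - 3), g - 1 - (g - 3)) by congr pair; lia.
by apply: reach_high_fiber; lia.
Qed.

Lemma reach_mid_fiber V t : g <= V <= k -> t < k -> reach T x0 (V, t).
Proof.
move=> V_range lt_tk.
have [r [V_even|V_odd]] : exists r, V = g + 2 * r \/ V = g + 2 * r + 1 by exists (V - g)./2; lia.
- have le_rR : r <= R by lia.
  rewrite V_even; case: (boolP ((k - 2 * r <= t) || (t <= k - g - 2 * r))) => t_arc.
    by walk_from (if r == 0 then 0 else k - 2 * r); exact: reach_first_pass.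
  by walk_from (k - g - 2 * r + 1); exact: reach_second_pass.
- have lt_rR : r < R by lia.
  rewrite V_odd; case: (boolP (k - g - 2 * r <= t <= k - 2 - 2 * r)) => t_arc.
    by walk_from (k - g - 2 * r); exact: reach_first_pass_odd lt_rR (reach_first_pass (ltnW lt_rR)).
  by walk_from (k - 1 - 2 * r); exact: reach_second_pass_odd lt_rR (reach_second_pass (ltnW lt_rR)).
Qed.

Lemma reach_all V t : V < n -> t < k -> reach T x0 (V, t).
Proof.
move=> lt_Vn lt_tk.
have [V0 | V_gt0] := posnP V.
  rewrite V0; apply: (reach_fiber reach_fiber0 (e := 0)) => //; first lia; first only_exit.
  by rewrite modn_small; lia.
have [lt_Vg | le_gV] := ltnP V g.
  apply: (reach_fiber (reach_low_fiber (V := V) _) (e := k - V)) => //; try lia; first only_exit.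
  by rewrite modn_small2; case_ifs; lia.
have [le_Vk | lt_kV] := leqP V k; first by apply: reach_mid_fiber; lia.
have V_def : V = k + 1 + (V - k - 1) by lia.
rewrite V_def; apply: (reach_fiber (reach_high_fiber _) (e := n - V)) => //.
all: rewrite -?V_def; try lia.
  by only_exit.
by rewrite modn_small; lia.
Qed.

End WalkOrbit.

Lemma walk_connected n k g V1 t1 V2 t2 :
  odd g -> odd k -> 2 < g -> 2 * g < k -> n = k + g - 1 ->
  V1 < n -> t1 < k -> V2 < n -> t2 < k -> reach (walk_step n k g) (V1, t1) (V2, t2).
Proof.
move=> g_odd k_odd g_gt2 lt_2g_k n_def lt_V1n lt_t1k lt_V2n lt_t2k.
have [h g_def] : exists h, g = 2 * h + 1.
  by exists g./2; rewrite -[g in LHS]odd_double_half g_odd; lia.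
have [R k_def] : exists R, k = g + 2 * R.
  by exists ((k - g)./2); rewrite -[k in LHS]odd_double_half k_odd; lia.
have [h_gt0 lt_hR] : 0 < h /\ h < R by lia.
have origin := walk_step_origin g_def h_gt0 k_def lt_hR n_def.
apply: (reach_between (P := fun p => p.1 < n /\ p.2 < k) _ _ origin) => //.
  by move=> [V t] [lt_Vn lt_tk]; apply: (reach_all g_def h_gt0 k_def lt_hR n_def).
by split => /=; lia.
Qed.

(* Height [t] of fiber [V] is the cell with diagonal index -2t (mod k) whose next step under
   CN lands in column V + t (mod n). *)
Definition walk_coldiag n k g (p : nat * nat) : nat * nat :=
  let: (V, t) := p in ((V + t + (n - if t == 0 then g else 1)) %% n, (2 * (k - t)) %% k).

Lemma double_sub_mod_eq0 k t : odd k -> t < k -> ((2 * (k - t)) %% k == 0) = (t == 0).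
Proof.
move=> k_odd lt_tk; case: (posnP t) => [-> | t_gt0]; first by rewrite subn0 modnMl.
have [q k_def] : exists q, k = q.*2.+1 by exists k./2; rewrite -[k in LHS]odd_double_half k_odd.
by rewrite modn_small2; case_ifs; lia.
Qed.

Section WalkCoordinates.
Variables (n k g : nat).
Hypotheses (k_odd : odd k) (n_def : n = k + g - 1) (lt_1g : 1 < g) (lt_gk : g < k).

Lemma coldiag_step_walk V t : V < n -> t < k ->
  coldiag_step n k g (walk_coldiag n k g (V, t)) = walk_coldiag n k g (walk_step n k g (V, t)).
Proof.
move=> lt_Vn lt_tk; rewrite /coldiag_step /walk_coldiag double_sub_mod_eq0 //.
set gap := if t == 0 then g else 1.
have gap_le_n : gap <= n by rewrite /gap; case: ifP; lia.
have -> : ((V + t + (n - gap)) %% n + gap) %% n = (V + t) %% n.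
  by rewrite modnDml -addnA subnK ?modnDr.
rewrite /walk_step; case: ifP => corner_Vt.
  by rewrite -addnA modnDml (_ : V + gap + (t + (n - gap)) = V + t + n) ?modnDr //; lia.
case: (ltnP t.+1 k) => [lt_t1k | t1_ge_k].
  rewrite (modn_small lt_t1k) /= modnDml (_ : V + t.+1 + (n - 1) = V + t + n) ?modnDr; last lia.
  by rewrite (_ : 2 * (k - t) + (k - 2) = 2 * (k - t.+1) + k) ?modnDr; last lia.
have -> : t.+1 = k by lia.
rewrite modnn /= subn0 modnMl modnDml (_ : 2 * (k - t) + (k - 2) = k) ?modnn; last lia.
by rewrite (_ : V + t = V + 0 + (n - g)); last lia.
Qed.

Lemma walk_coldiag_onto j d : j < n -> d < k ->
  exists V t, [/\ V < n, t < k & walk_coldiag n k g (V, t) = (j, d)].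
Proof.
move=> lt_jn lt_dk.
have [q k_def] : exists q, k = q.*2.+1 by exists k./2; rewrite -[k in LHS]odd_double_half k_odd.
suff [t [lt_tk t_d]] : exists t, t < k /\ (2 * (k - t)) %% k = d.
  set gap := if t == 0 then g else 1.
  have gap_le_n : gap <= n by rewrite /gap; case: ifP; lia.
  exists ((j + gap + (n - t)) %% n), t; split => //; first by rewrite ltn_pmod; lia.
  rewrite /walk_coldiag -/gap t_d -addnA modnDml.
  by rewrite (_ : j + gap + (n - t) + (t + (n - gap)) = j + n + n) ?modnDr ?modn_small //; lia.
have [e [d_even|d_odd]] : exists e, d = 2 * e \/ d = 2 * e + 1 by exists d./2; lia.
- case: (posnP e) => [e0 | e_gt0]; first by exists 0; rewrite subn0 modnMl; lia.
  by exists (k - e); rewrite (_ : 2 * (k - (k - e)) = d) ?modn_small; lia.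
- by exists (q - e); rewrite (_ : 2 * (k - (q - e)) = d + k) ?modnDr ?modn_small; lia.
Qed.

End WalkCoordinates.

Section Solution.
Variables (n k g : nat) (A : {set 'I_n * 'I_n}).
Hypotheses (g_odd : odd g) (k_odd : odd k) (g_gt2 : 2 < g) (lt_2g_k : 2 * g < k)
  (n_def : n = k + g - 1) (A_diag : cyc_diag k A).
Local Notation CN1 := (CN A (fun=> 1%R) (column_signs k)).

Let lt_1g : 1 < g. Proof. lia. Qed.
Let lt_gk : g < k. Proof. lia. Qed.

Lemma coldiag_CN c : c \in A -> coldiag (CN1 c) = coldiag_step n k g (coldiag c).
Proof.
move=> c_in_A; have g_gt0 : 0 < g by lia.
rewrite /CN /sR_pow eqxx; set c' := sR A c.
have := c_in_A; rewrite (mem_cyc_diag A_diag).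
have := coldiag_sR A_diag n_def g_gt0 c_in_A; rewrite -/c'.
case: (coldiag c) => j d /= c'_def lt_dk.
have c'_in_A : c' \in A by rewrite (mem_cyc_diag A_diag) c'_def /=; case: ifP; lia.
rewrite /sC_pow /column_signs (_ : c'.2 = (coldiag c').1 :> nat) // c'_def /=.
case corner_j': (corner k _) => /=.
  by rewrite (coldiag_sC A_diag n_def) // c'_def; congr pair; case_ifs; lia.
rewrite (coldiag_sCinv A_diag n_def) // c'_def [(d + _) %% k]modn_small2.
all: by case_ifs; try congr pair; lia.
Qed.

Lemma CN_in_cyc_diag c : c \in A -> CN1 c \in A.
Proof.
move=> c_in_A; rewrite (mem_cyc_diag A_diag) coldiag_CN // coldiag_step_lt //.
by rewrite -(mem_cyc_diag A_diag).
Qed.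

Lemma CN_inj_cyc_diag : {in A &, injective CN1}.
Proof.
move=> x y x_in_A y_in_A /(congr1 (@coldiag n)); rewrite !coldiag_CN // => /coldiag_step_inj.
by rewrite -!(mem_cyc_diag A_diag) => /(_ (ltn_ord _) x_in_A (ltn_ord _) y_in_A) /coldiag_inj.
Qed.

Lemma walk_coords c : c \in A ->
  exists V t, [/\ V < n, t < k & walk_coldiag n k g (V, t) = coldiag c].
Proof.
rewrite (mem_cyc_diag A_diag) => lt_ck.
have [V [t [lt_Vn lt_tk eq_Vt]]] := walk_coldiag_onto k_odd n_def lt_1g lt_gk (ltn_ord c.2) lt_ck.
by exists V, t; split.
Qed.

Lemma CN_reach_cyc_diag x y : x \in A -> y \in A -> exists s, iter s CN1 x = y.
Proof.
move=> x_in_A y_in_A.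
have [V1 [t1 [lt_V1n lt_t1k x_def]]] := walk_coords x_in_A.
have [V2 [t2 [lt_V2n lt_t2k y_def]]] := walk_coords y_in_A.
have [s walk_s] := walk_connected g_odd k_odd g_gt2 lt_2g_k n_def lt_V1n lt_t1k lt_V2n lt_t2k.
exists s; apply: (@coldiag_inj n).
pose sim c p := [/\ c \in A, p.1 < n, p.2 < k & coldiag c = walk_coldiag n k g p].
have sim_step c p : sim c p -> sim (CN1 c) (walk_step n k g p).
  case: p => V t [c_in_A lt_Vn lt_tk c_def].
  have [? ?] := walk_step_valid g lt_Vn lt_tk.
  by split=> //; [exact: CN_in_cyc_diag | rewrite coldiag_CN // c_def coldiag_step_walk].
have x_sim : sim x (V1, t1) by split.
by have [_ _ _ ->] := iter_sim sim_step s x_sim; rewrite walk_s y_def.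
Qed.

Lemma cyc_diag_solution : is_solution A (fun=> 1%R) (column_signs k).
Proof.
split=> [i | j | | |]; [by left | | exact: CN_in_cyc_diag | exact: CN_inj_cyc_diag | ].
  by rewrite /column_signs; case: ifP; [left | right].
exact: CN_reach_cyc_diag.
Qed.

End Solution.

Theorem corollary5p6 (m g : nat) (A : {set 'I_(m * g) * 'I_(m * g)}) :
  odd m -> odd g -> 3 <= m -> 3 <= g ->
  cyc_diag (1 + (m - 1) * g) A ->
  exists R C : 'I_(m * g) -> int, is_solution A R C.
Proof.
move=> m_odd g_odd m_ge3 g_ge3 A_diag.
exists (fun=> 1%R), (column_signs (1 + (m - 1) * g)).
apply: (cyc_diag_solution (g := g)) => //; first by rewrite oddD oddM oddB ?m_odd; lia.
all: nia.
Qed.
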